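(* Let $n\geq 2$ and let $\mathbb{H}^{n}\times\mathbb{R}=\{(x,t)\in\mathbb{R}^{n}\times\mathbb{R}: x=(x_1,\dots,x_n),\ x_n>0\}$ be endowed with the metric $g=\frac{1}{x_{n}^{2}}\sum_{i=1}^{n}dx_{i}^{2}+dt^{2}$. Let $0<m<\infty$ and $\lambda$ be constants and $f$ a smooth function on $\mathbb{H}^{n}\times\mathbb{R}$ with $Ric+\nabla^{2}f-\frac{1}{m}df\otimes df=\lambda g$. Then (for each fixed $x$) either $\frac{\partial f}{\partial t}(x,t)=\pm\sqrt{-m\lambda}$ for all $t$, or $\frac{\partial f}{\partial t}(x,t)=-\sqrt{-m\lambda}\tanh(\mu t+a)$ for all $t$, where $a=a(x)$ and $\mu=\sqrt{-\frac{\lambda}{m}}$.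
   Context: $Ric$ denotes the Ricci tensor of $g$ and $\nabla^2 f$ the Hessian of $f$ with respect to $g$. *)

From HB Require Import structures.
From mathcomp Require Import all_boot all_order all_algebra.
From mathcomp Require Import all_classical all_reals all_analysis.
Set Implicit Arguments. Unset Strict Implicit. Unset Printing Implicit Defensive.
Import Order.TTheory GRing.Theory Num.Theory.
Import numFieldNormedType.Exports.
Local Open Scope ring_scope.

Section Coordinates.
Variables (R : realType) (N : nat).
Local Notation V := 'rV[R]_N.

Definition ebasis (i : 'I_N) : V := delta_mx 0 i.

Definition partial (i : 'I_N) (f : V -> R) : V -> R :=
  fun p => 'D_(ebasis i) f p.

Fixpoint iter_partial (s : seq 'I_N) (f : V -> R) : V -> R :=
  match s with
  | [::] => f
  | i :: s' => partial i (iter_partial s' f)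
  end.

Definition smooth_on (U : set V) (f : V -> R) : Prop :=
  forall (s : seq 'I_N) (p : V), U p ->
    (forall i : 'I_N, derivable (iter_partial s f) p (ebasis i))
    /\ {for p, continuous (iter_partial s f)}.

(* A Riemannian metric given in global coordinates: g i j p = g_{ij}(p). *)
Variable g : 'I_N -> 'I_N -> V -> R.

Definition ginv (i j : 'I_N) (p : V) : R :=
  invmx (\matrix_(a < N, b < N) g a b p) i j.

Definition christoffel (k i j : 'I_N) (p : V) : R :=
  2^-1 * \sum_(l < N) ginv k l p *
     (partial i (g j l) p + partial j (g i l) p - partial l (g i j) p).

Definition ricci (i j : 'I_N) (p : V) : R :=
  \sum_(k < N) (partial k (christoffel k i j) p - partial j (christoffel k i k) p)
  + \sum_(k < N) \sum_(l < N)
      (christoffel k k l p * christoffel l i j p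
       - christoffel k j l p * christoffel l i k p).

Definition hessian (f : V -> R) (i j : 'I_N) (p : V) : R :=
  partial i (partial j f) p - \sum_(k < N) christoffel k i j p * partial k f p.

End Coordinates.

Definition tanh {R : realType} (x : R) : R :=
  (expR x - expR (- x)) / (expR x + expR (- x)).

(* H^n x R as the subset {x_n > 0} of R^(n+1), coordinates
   (x_1,...,x_n,t) = indices 0,...,n-1,n. *)
Definition xn_idx (n : nat) : 'I_n.+1 := inord n.-1.
Definition t_idx (n : nat) : 'I_n.+1 := ord_max.

Definition HnR (R : realType) (n : nat) : set 'rV[R]_n.+1 :=
  [set p | 0 < p 0 (xn_idx n)].

Definition gHnR (R : realType) (n : nat) (i j : 'I_n.+1) (p : 'rV[R]_n.+1) : R :=
  if i == j then (if i == t_idx n then 1 else (p 0 (xn_idx n) ^+ 2)^-1) else 0.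

Definition with_t (R : realType) (n : nat) (p : 'rV[R]_n.+1) (t : R) : 'rV[R]_n.+1 :=
  \row_j (if j == t_idx n then t else p 0 j).

Set Warnings "-notation-overridden,-ambiguous-paths,-notation-incompatible-prefix".
From HB Require Import structures.
From mathcomp Require Import all_boot all_order all_algebra.
From mathcomp Require Import all_classical all_reals all_analysis.
From mathcomp Require Import ring lra.
Set Implicit Arguments. Unset Strict Implicit. Unset Printing Implicit Defensive.
Import Order.TTheory GRing.Theory Num.Theory.
Import numFieldNormedType.Exports.
Local Open Scope ring_scope.

(* Along each line {x} x R the metric is a product with a flat factor: its
   coefficients do not depend on t and g_tj is constant, so every Christoffel
   symbol Gamma^k_tj vanishes.  Hence Ric_tt = 0, (nabla^2 f)_tt = d_t^2 f and
   g_tt = 1, and the tt-component of the soliton equation is the Riccati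
   equation u' = lambda + u^2 / m for u(t) = d_t f(x, t).  Its solutions defined
   on all of R are classified directly: for lambda > 0, atan (u / c) - c t / m is
   constant (c = sqrt (m lambda)), impossible since atan is bounded; for
   lambda = 0 either u vanishes somewhere, hence everywhere by uniqueness
   (Gronwall), or 1/u + t/m is constant, so 1/u vanishes somewhere; for
   lambda < 0 with c = sqrt (-m lambda), either u meets an equilibrium +-c, hence
   equals it, or r = (u - c)/(u + c) solves r' = (2c/m) r, so
   r = -exp (2 (c t / m + a)) and u = -c tanh (c t / m + a). *)

Section LinearODE.
Context {R : realType}.

Lemma derivable_continuous (z : R -> R) : (forall t, derivable z t 1) -> continuous z.
Proof. by move=> dz t; apply/differentiable_continuous/derivable1_diffP. Qed.

Lemma is_derive_expRM (a t : R) :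
  is_derive t 1 (fun x : R => expR (a * x)) (expR (a * t) * a).
Proof.
apply: (@is_derive1_comp _ expR (fun x => a * x)).
have -> : (fun x : R => a * x) = a \*: (@id R) by apply/funext.
by apply: is_derive_eq; rewrite [_%:A]mulr1.
Qed.

Lemma is_derive_sqr_expRM (z k : R -> R) (a t : R) :
  is_derive t 1 z (z t * k t) ->
  is_derive t 1 (fun x => z x ^+ 2 * expR (a * x))
    (z t ^+ 2 * expR (a * t) * (2 * k t + a)).
Proof.
move=> Dz; have := is_deriveM (is_deriveX 2 Dz) (is_derive_expRM a t).
by move/is_derive_eq; apply; rewrite /= exprfctE /GRing.scale /=; ring.
Qed.

(* Gronwall: [z ^+ 2 * expR (- 2 K s t)], with [K] bounding [|k|] between [t0]
   and [t1] and [s] the sign of [t1 - t0], cannot grow from [t0] towards [t1]. *)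
Lemma gronwall_eq0 (z k : R -> R) (t0 : R) :
  (forall t : R, is_derive t 1 z (z t * k t)) -> continuous k -> z t0 = 0 ->
  forall t, z t = 0.
Proof.
move=> Dz ck z0 t1.
have ab : Num.min t0 t1 <= Num.max t0 t1 by rewrite le_max !ge_min lexx.
have [c0 _ kmax] := EVT_max ab (continuous_subspaceT
  (fun x => continuous_comp (ck x) (@norm_continuous _ R (k x)))).
set K : R := `|k c0|; set s : R := Num.sg (t1 - t0); set a : R := - (2 * K * s).
pose phi (x : R) := z x ^+ 2 * expR (a * x).
pose dphi (x : R) := z x ^+ 2 * expR (a * x) * (2 * k x + a).
have Dphi (x : R) : is_derive x 1 phi (dphi x) := is_derive_sqr_expRM a (Dz x).
have cphi : {within `[Num.min t0 t1, Num.max t0 t1], continuous phi}%classic.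
  by apply/continuous_subspaceT/derivable_continuous => x; case: (Dphi x).
have [c cab mvt] := MVT_segment ab (fun x _ => Dphi x) cphi.
have {}mvt : phi t1 - phi t0 = dphi c * (t1 - t0).
  move: mvt; case: (leP t0 t1) => _ // mvt.
  by rewrite -opprB mvt -mulrN opprB.
have dphi_le0 : dphi c * (t1 - t0) <= 0.
  have kc : k c * (t1 - t0) <= K * (s * (t1 - t0)).
    rewrite /s -normrEsg; apply: le_trans (ler_norm _) _.
    by rewrite normrM ler_wpM2r // kmax.
  have -> : dphi c * (t1 - t0) =
      z c ^+ 2 * expR (a * c) * 2 * (k c * (t1 - t0) - K * (s * (t1 - t0))).
    by rewrite /dphi /a; ring.
  rewrite mulr_ge0_le0 ?subr_le0 //.
  by apply/mulr_ge0/ler0n; apply/mulr_ge0/expR_ge0/sqr_ge0.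
have : phi t1 <= 0 by move: dphi_le0; rewrite -mvt /phi z0 expr0n mul0r subr0.
rewrite /phi pmulr_lle0 ?expR_gt0 // => z1.
by apply/eqP; rewrite -sqrf_eq0 eq_le z1 sqr_ge0.
Qed.

Lemma expR_of_is_derive_scale (z : R -> R) (a : R) :
  (forall t : R, is_derive t 1 z (a * z t)) -> forall t, z t = z 0 * expR (a * t).
Proof.
move=> Dz t; pose w (x : R) := z x * expR (- a * x).
have Dw (x : R) : is_derive x 1 w 0.
  have := is_deriveM (Dz x) (is_derive_expRM (- a) x).
  by move/is_derive_eq; apply; rewrite /GRing.scale /=; ring.
have := is_derive_0_is_cst t 0 Dw.
rewrite /w mulr0 expR0 mulr1 => <-.
by rewrite -mulrA -expRD mulNr addNr expR0 mulr1.
Qed.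

End LinearODE.

Lemma tanhE {R : realType} (x : R) :
  tanh x = (expR (2 * x) - 1) / (expR (2 * x) + 1).
Proof.
have ex0 := expR_gt0 x.
rewrite /tanh expRN mulr_natl mulr2n expRD; field.
by rewrite !gt_eqF // ?addr_gt0 ?mulr_gt0 ?invr_gt0.
Qed.

Lemma ratio_expR_tanh {R : realType} (c y x : R) :
  y + c != 0 -> (y - c) / (y + c) = - expR (2 * x) -> y = - c * tanh x.
Proof.
rewrite tanhE; set E := expR (2 * x) => yc /(canRL (divfK yc)) h.
have E1 : E + 1 != 0 by rewrite gt_eqF // ltr_pwDl ?expR_gt0.
apply: (mulIf E1); rewrite mulrAC -mulrA [(E + 1) * _]mulrC divfK //.
apply/eqP; rewrite -subr_eq0; apply/eqP.
by transitivity ((y - c) + E * (y + c)); [ring | rewrite h; ring].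
Qed.

Section Riccati.
Context {R : realType}.
Variables (m l : R) (u : R -> R).
Hypotheses (m_gt0 : 0 < m) (Du : forall t : R, is_derive t 1 u (l + m^-1 * u t ^+ 2)).

Lemma riccati_equilibrium (e t0 : R) :
  e ^+ 2 = - m * l -> u t0 = e -> forall t, u t = e.
Proof.
move=> ee ut0 t; apply/eqP; rewrite -subr_eq0; apply/eqP.
have le : l = - m^-1 * e ^+ 2 by rewrite ee; field; rewrite gt_eqF.
have Dz (x : R) :
    is_derive x 1 (fun y => u y - e) ((u x - e) * (m^-1 * (u x + e))).
  by apply: is_derive_eq; rewrite le /GRing.scale /=; ring.
apply: (gronwall_eq0 Dz _ (t0 := t0)); last by rewrite ut0 subrr.
by apply: derivable_continuous => x; exact: ex_derive.
Qed.

Lemma riccati_gt0_absurd : 0 < l -> False.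
Proof.
move=> l_gt0; set c := Num.sqrt (m * l).
have c_gt0 : 0 < c by rewrite sqrtr_gt0 mulr_gt0.
have le : l = c ^+ 2 / m by rewrite sqr_sqrtr ?mulr_ge0 ?ltW //; field; rewrite gt_eqF.
pose v (t : R) := atan (c^-1 * u t) - c / m * t.
have Dv (t : R) : is_derive t 1 v 0.
  have Dw : is_derive t 1 (fun x => c^-1 * u x) (c^-1 * (l + m^-1 * u t ^+ 2)).
    exact: is_derive_eq.
  have Da := is_derive1_comp (is_derive1_atan _) Dw.
  rewrite /v; apply: is_derive_eq.
  have h : 0 < c ^+ 2 + u t ^+ 2 by rewrite ltr_pwDl ?sqr_ge0 ?exprn_gt0.
  rewrite [_%:A]mulr1 {1}le; field.
  by rewrite !gt_eqF.
set ts := (pi / 2 - v 0) * (m / c).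
have := is_derive_0_is_cst ts 0 Dv.
have -> : v ts = atan (c^-1 * u ts) - (pi / 2 - v 0).
  by rewrite {1}/v /ts; congr (_ - _); field; rewrite !gt_eqF.
have := atan_ltpi2 (c^-1 * u ts); lra.
Qed.

Lemma riccati_eq0 : l = 0 -> forall t, u t = 0.
Proof.
move=> l0; have [[t0 ut0]|u_neq0] := pselect (exists t0, u t0 = 0).
  by apply: (riccati_equilibrium (t0 := t0)); rewrite // l0 mulr0 expr0n.
have {}u_neq0 (t : R) : u t != 0 by apply/eqP => ut0; apply: u_neq0; exists t.
pose w (t : R) := (u t)^-1 + m^-1 * t.
have Dw (t : R) : is_derive t 1 w 0.
  have DV := is_deriveV (u_neq0 t) (Du t).
  rewrite /w; apply: is_derive_eq.
  rewrite [_%:A]mulr1 /GRing.scale /= l0; field.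
  by rewrite gt_eqF ?u_neq0.
set ts := m / u 0.
have := is_derive_0_is_cst ts 0 Dw.
rewrite /w /ts mulr0 addr0 mulKf ?gt_eqF // => /(canRL (addrK _)).
by rewrite subrr => /eqP; rewrite invr_eq0 (negbTE (u_neq0 _)).
Qed.

Lemma riccati_lt0_tanh (c : R) : 0 < c -> c ^+ 2 = - m * l ->
  (forall t, u t != c) -> (forall t, u t != - c) ->
  exists a, forall t, u t = - c * tanh (c / m * t + a).
Proof.
move=> c_gt0 cc u_neq_c u_neq_Nc.
have le : l = - c ^+ 2 / m by rewrite cc; field; rewrite gt_eqF.
have ucN (t : R) : u t - c != 0 by rewrite subr_eq0.
have ucD (t : R) : u t + c != 0 by rewrite addr_eq0.
pose r (t : R) := (u t - c) / (u t + c).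
have Dr (t : R) : is_derive t 1 r (2 * c / m * r t).
  have Dum : is_derive t 1 (fun x => u x - c) (l + m^-1 * u t ^+ 2).
    by apply: is_derive_eq; rewrite subr0.
  have Dup : is_derive t 1 (fun x => u x + c) (l + m^-1 * u t ^+ 2).
    by apply: is_derive_eq; rewrite addr0.
  have -> : r = (fun x => u x - c) * (fun x => (u x + c)^-1) by apply/funext.
  have DV := is_deriveV (f := fun x => u x + c) (ucD t) Dup.
  apply: (is_derive_eq (is_deriveM Dum DV)).
  by rewrite /r mulrfctE /GRing.scale /= le; field; rewrite ucD gt_eqF.
have r_expR := expR_of_is_derive_scale Dr.
(* [r 0 > 0] is excluded since [r] would then reach 1, i.e. [u t - c = u t + c]. *)
have r_neq1 (t : R) : r t != 1.
  by apply/eqP => /(canRL (divfK (ucD t))); rewrite mul1r; lra.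
have r0_lt0 : r 0 < 0.
  have r0_neq0 : r 0 != 0 by rewrite /r mulf_neq0 ?invr_eq0.
  rewrite ltNge le_eqVlt eq_sym (negbTE r0_neq0) /=; apply/negP => r0_gt0.
  pose ts := ln (r 0)^-1 / (2 * c / m).
  have : r ts = 1.
    rewrite r_expR /ts [2 * c / m * _]mulrC divfK ?mulf_neq0 ?invr_eq0 ?gt_eqF //.
    by rewrite lnK ?posrE ?invr_gt0 // mulfV ?gt_eqF.
  by apply/eqP; rewrite r_neq1.
exists (ln (- r 0) / 2) => t; apply: ratio_expR_tanh (ucD t) _.
have -> : 2 * (c / m * t + ln (- r 0) / 2) = 2 * c / m * t + ln (- r 0).
  by field; rewrite gt_eqF.
by rewrite expRD lnK ?posrE ?oppr_gt0 // mulrN opprK [expR _ * _]mulrC -r_expR.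
Qed.

Lemma riccati_solutions :
  (forall t, u t = Num.sqrt (- m * l)) \/ (forall t, u t = - Num.sqrt (- m * l)) \/
  (exists a, forall t,
     u t = - Num.sqrt (- m * l) * tanh (Num.sqrt (- l / m) * t + a)).
Proof.
case: (ltgtP l 0) => [l_lt0|l_gt0|l0]; last 2 first.
- by case: riccati_gt0_absurd.
- by left => t; rewrite l0 mulr0 sqrtr0; apply: riccati_eq0.
set c := Num.sqrt (- m * l).
have ml_gt0 : 0 < - m * l by rewrite mulNr -mulrN mulr_gt0 ?oppr_gt0.
have c_gt0 : 0 < c by rewrite sqrtr_gt0.
have cc : c ^+ 2 = - m * l by rewrite sqr_sqrtr ?ltW.
have [[t0 ut0]|u_neq_c] := pselect (exists t0, u t0 = c).
  by left; apply: riccati_equilibrium ut0.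
have [[t0 ut0]|u_neq_Nc] := pselect (exists t0, u t0 = - c).
  by right; left; apply: riccati_equilibrium ut0; rewrite sqrrN.
right; right.
have -> : Num.sqrt (- l / m) = c / m.
  rewrite -[- l / m](_ : (c / m) ^+ 2 = _) ?sqrtr_sqr ?ger0_norm ?divr_ge0 ?ltW //.
  by rewrite expr_div_n cc; field; rewrite gt_eqF.
apply: riccati_lt0_tanh c_gt0 cc _ _ => t; apply/eqP => ut.
- by apply: u_neq_c; exists t.
- by apply: u_neq_Nc; exists t.
Qed.

End Riccati.

Section DirectionalDerivative.
Context {R : realType} {V : normedModType R}.

Lemma derive_translation_invariant (F : V -> R) (v a : V) :
  (forall h : R, F (h *: v + a) = F a) -> 'D_v F a = 0.
Proof.
move=> Finv; rewrite /derive.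
have -> : (fun h : R => h^-1 *: ((F \o shift a) (h *: v) - F a)) = fun=> 0.
  by apply/funext => h; rewrite /= Finv subrr scaler0.
exact: lim_cst.
Qed.

Lemma is_derive_along_line (F : V -> R) (v a : V) (s : R) :
  derivable F (s *: v + a) v ->
  is_derive s 1 (fun t : R => F (t *: v + a)) ('D_v F (s *: v + a)).
Proof.
have quotE : (fun h : R => h^-1 *:
      (((fun t : R => F (t *: v + a)) \o shift s) (h *: 1) - F (s *: v + a))) =
    (fun h : R => h^-1 *: ((F \o shift (s *: v + a)) (h *: v) - F (s *: v + a))).
  by apply/funext => h; rewrite /= [h *: 1]mulr1 scalerDl addrA.
by move=> dF; apply: DeriveDef; rewrite /derivable /derive quotE.
Qed.

End DirectionalDerivative.

Section MetricWithFlatLine.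
Variables (R : realType) (N : nat) (g : 'I_N -> 'I_N -> 'rV[R]_N -> R) (e : 'I_N).
Hypothesis g_translation :
  forall i j (h : R) (q : 'rV[R]_N), g i j (h *: ebasis R e + q) = g i j q.
Hypothesis g_row_cst : forall j (q q' : 'rV[R]_N), g e j q = g e j q'.

Lemma christoffel_line k j (q : 'rV[R]_N) : christoffel g k e j q = 0.
Proof.
rewrite /christoffel big1 ?mulr0 // => l _; rewrite /partial.
rewrite !derive_translation_invariant ?addr0 ?subrr ?mulr0 // => h.
all: by [exact: g_translation | exact: g_row_cst].
Qed.

Lemma ricci_line (q : 'rV[R]_N) : ricci g e e q = 0.
Proof.
have Gamma0 k j : christoffel g k e j = fun=> 0.
  by apply/funext => ?; exact: christoffel_line.
rewrite /ricci big1 => [|k _]; last first.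
  by rewrite !Gamma0 /partial !derive_translation_invariant ?subrr.
rewrite add0r big1 // => k _; apply: big1 => l _.
by rewrite !christoffel_line mulr0 mul0r subrr.
Qed.

Lemma hessian_line (f : 'rV[R]_N -> R) (q : 'rV[R]_N) :
  hessian g f e e q = partial e (partial e f) q.
Proof. by rewrite /hessian big1 ?subr0 // => k _; rewrite christoffel_line mul0r. Qed.

End MetricWithFlatLine.

Section HyperbolicTimesLine.
Variables (R : realType) (n : nat).
Hypothesis n_gt0 : (0 < n)%N.
Local Notation t := (t_idx n).
Local Notation g := (@gHnR R n).

Lemma xn_idx_neq_t_idx : xn_idx n != t.
Proof.
apply/eqP => /(congr1 val); rewrite /= inordK ?ltnS ?leq_pred //.
by case: n n_gt0 => // k _ /n_Sn.
Qed.

Lemma xn_translation (h : R) (q : 'rV[R]_n.+1) :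
  (h *: ebasis R t + q) 0 (xn_idx n) = q 0 (xn_idx n).
Proof. by rewrite !mxE (negbTE xn_idx_neq_t_idx) mulr0 add0r. Qed.

Lemma gHnR_translation i j (h : R) (q : 'rV[R]_n.+1) :
  gHnR i j (h *: ebasis R t + q) = gHnR i j q.
Proof. by rewrite /gHnR xn_translation. Qed.

Lemma gHnR_t_row j (q q' : 'rV[R]_n.+1) : gHnR t j q = gHnR t j q'.
Proof. by rewrite /gHnR; case: eqP => // _; rewrite eqxx. Qed.

Lemma gHnR_tt (q : 'rV[R]_n.+1) : gHnR t t q = 1.
Proof. by rewrite /gHnR !eqxx. Qed.

Lemma with_tE (p : 'rV[R]_n.+1) (s : R) : with_t p s = s *: ebasis R t + with_t p 0.
Proof.
apply/rowP => j; rewrite !mxE eqxx.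
by case: (j == t); rewrite ?mulr1 ?addr0 ?mulr0 ?add0r.
Qed.

Lemma HnR_with_t (p : 'rV[R]_n.+1) (s : R) : HnR p -> HnR (with_t p s).
Proof. by rewrite /HnR /= mxE (negbTE xn_idx_neq_t_idx). Qed.

Lemma riccati_along_t (m lambda : R) (f : 'rV[R]_n.+1 -> R) (p : 'rV[R]_n.+1) :
  (forall q : 'rV[R]_n.+1, HnR q -> derivable (partial t f) q (ebasis R t)) ->
  (forall q : 'rV[R]_n.+1, HnR q -> ricci g t t q + hessian g f t t q
     - m^-1 * (partial t f q * partial t f q) = lambda * g t t q) ->
  HnR p -> forall s : R, is_derive s 1 (fun s => partial t f (with_t p s))
                       (lambda + m^-1 * partial t f (with_t p s) ^+ 2).
Proof.
move=> dft soliton_tt Hp s; have Hq := HnR_with_t s Hp.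
have := dft _ Hq; rewrite with_tE => /is_derive_along_line Df.
have -> : (fun s => partial t f (with_t p s)) =
    (fun s => partial t f (s *: ebasis R t + with_t p 0)).
  by apply/funext => ?; rewrite with_tE.
apply: is_derive_eq Df _; rewrite -with_tE.
have := soliton_tt _ Hq; rewrite (ricci_line gHnR_translation gHnR_t_row).
rewrite (hessian_line gHnR_translation gHnR_t_row) gHnR_tt add0r mulr1 => <-.
by rewrite /partial expr2; ring.
Qed.

End HyperbolicTimesLine.

Theorem lemma3 (R : realType) (n : nat) (m lambda : R) (f : 'rV[R]_n.+1 -> R) :
  (2 <= n)%N -> 0 < m ->
  smooth_on (@HnR R n) f ->
  (forall (p : 'rV[R]_n.+1), @HnR R n p -> forall i j : 'I_n.+1,
     ricci (@gHnR R n) i j p + hessian (@gHnR R n) f i j p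
       - m^-1 * (partial i f p * partial j f p) = lambda * @gHnR R n i j p) ->
  forall p : 'rV[R]_n.+1, @HnR R n p ->
    (forall t : R, partial (t_idx n) f (with_t p t) = Num.sqrt (- m * lambda)) \/
    (forall t : R, partial (t_idx n) f (with_t p t) = - Num.sqrt (- m * lambda)) \/
    (exists a : R, forall t : R,
       partial (t_idx n) f (with_t p t) =
         - Num.sqrt (- m * lambda) * tanh (Num.sqrt (- lambda / m) * t + a)).
Proof.
move=> n_ge2 m_gt0 f_smooth f_soliton p Hp.
have n_gt0 : (0 < n)%N by apply: leq_trans n_ge2.
apply: (riccati_solutions m_gt0 (riccati_along_t n_gt0 _ _ Hp)) => q Hq.
- exact: (f_smooth [:: t_idx n] q Hq).1.
- exact: f_soliton.
Qed.
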